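(* Let $\kappa_1,\kappa_2,d_1,d_2>0$ be constants (specific heats at constant volume and thermal conductivities of the liquid phase (index $1$) and vapor phase (index $2$)), let $\ell<0$ be a constant (the latent heat), let $j_\Gamma>0$ be a constant (the phase flux), let $r>0$ be a constant (the volume specific heat source), and let $\theta_*\in\mathbf{R}$ (the given interface temperature) and $\theta_{\mathrm{in}}<\theta_*$ (the entrance temperature). Consider the stationary free boundary problem of finding $x_*>0$, $\theta_1\colon[0,x_*]\to\mathbf{R}$ and $\theta_2\colon[x_*,\infty)\to\mathbf{R}$ such that \begin{align*} &\kappa_1 j_\Gamma \theta_1' - d_1\theta_1'' = r \quad\text{in } (0,x_* ),\\ &\kappa_2 j_\Gamma \theta_2' - d_2\theta_2'' = r \quad\text{in } (x_*,\infty),\\ &\theta_1(x_* )=\theta_2(x_* )=\theta_*,\\ &\ell j_\Gamma + d_2\theta_2'(x_* ) - d_1\theta_1'(x_* ) = 0,\\ &\theta_1(0)=\theta_{\mathrm{in}},\qquad \theta_1\le\theta_* \text{ on } [0,x_*], \end{align*} and $\theta_2$ grows at most linearly as $x\to\infty$. Then \[ (-\ell)\le \frac{d_2 r}{\kappa_2 j_\Gamma^2} \] holds if and only if this problem has a unique solution $(\theta_1,\theta_2,x_* )$. Moreover, the location $x_*=x_*(\theta_{\mathrm{in}},j_\Gamma)$ of the interface is strictly decreasing in $\theta_{\mathrm{in}}$ and strictly increasing in $j_\Gamma$, and $x_*\to\infty$ as $j_\Gamma\to\infty$ (with $\theta_{\mathrm{in}}$ fixed) or as $\theta_{\mathrm{in}}\to-\infty$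 (with $j_\Gamma$ fixed).
   Context: This is the one-dimensional stationary two-phase Stefan problem with drift on the half line $(0,\infty)$: the liquid phase occupies $(0,x_* )$, the vapor phase occupies $(x_*,\infty)$, and the point $x_*$ is called the dryout point. The phase flux is $j_\Gamma=\rho_1u_1$ where $\rho_1>0$ is the liquid density and $u_1>0$ the liquid velocity, and $r=\rho_1r_1=\rho_2r_2$ is the (common) volume specific internal heat source. *)

From Stdlib Require Import Reals.
From Coquelicot Require Import Coquelicot.
Open Scope R_scope.

Definition left_deriv (f : R -> R) (x l : R) : Prop :=
  filterlim (fun y => (f y - f x) / (y - x)) (at_left x) (locally l).
Definition right_deriv (f : R -> R) (x l : R) : Prop :=
  filterlim (fun y => (f y - f x) / (y - x)) (at_right x) (locally l).

(* (xs, th1, th2) is a (classical) solution of the stationary two-phase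
   Stefan problem with drift.  th1 is only meaningful on [0, xs] and th2 on
   [xs, +oo); values outside are irrelevant.  The derivatives at the
   interface are the one-sided ones (left for th1, right for th2). *)
Definition stefan_solution (kappa1 kappa2 d1 d2 l jG r theta_star theta_in : R)
    (xs : R) (th1 th2 : R -> R) : Prop :=
  0 < xs /\
  (forall x, 0 < x < xs ->
     ex_derive th1 x /\ ex_derive (Derive th1) x /\
     kappa1 * jG * Derive th1 x - d1 * Derive (Derive th1) x = r) /\
  (forall x, xs < x ->
     ex_derive th2 x /\ ex_derive (Derive th2) x /\
     kappa2 * jG * Derive th2 x - d2 * Derive (Derive th2) x = r) /\
  th1 xs = theta_star /\ th2 xs = theta_star /\
  (exists p1 p2, left_deriv th1 xs p1 /\ right_deriv th2 xs p2 /\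
     l * jG + d2 * p2 - d1 * p1 = 0) /\
  th1 0 = theta_in /\ filterlim th1 (at_right 0) (locally (th1 0)) /\
  (forall x, 0 <= x <= xs -> th1 x <= theta_star) /\
  (exists C X, forall x, X <= x -> Rabs (th2 x) <= C * (1 + Rabs x)).

Definition stefan_unique (kappa1 kappa2 d1 d2 l jG r theta_star theta_in : R)
    : Prop :=
  exists xs th1 th2,
    stefan_solution kappa1 kappa2 d1 d2 l jG r theta_star theta_in xs th1 th2 /\
    forall xs' th1' th2',
      stefan_solution kappa1 kappa2 d1 d2 l jG r theta_star theta_in xs' th1' th2' ->
      xs' = xs /\ (forall x, 0 <= x <= xs -> th1' x = th1 x) /\
      (forall x, xs <= x -> th2' x = th2 x).

From Stdlib Require Import Reals Lra Psatz.
From Coquelicot Require Import Coquelicot.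
Open Scope R_scope.

(* On each phase the equation is linear with constant coefficients, so the temperature is
   affine plus a multiple of exp (kappa j x / d).  At most linear growth kills the
   exponential in the vapour, whose slope is therefore r / (kappa2 j); the Stefan condition
   then fixes the left slope p of theta_1 at the interface, and theta_1 <= theta_* with
   equality at x_* forces p >= 0, which is exactly the criterion.  Value and slope at x_*
   determine theta_1, and the drop G(s) = theta_* - theta_1 (x_* - s) satisfies G(0) = 0,
   G' = c (1 - exp (-a s)) + p exp (-a s) > 0 and G(s) -> oo, so x_* is the unique root of
   G(s) = theta_* - theta_in.  The monotonicity of x_* comes from that of G in s and in j
   (the latter because (1 - exp (-v)) / v decreases), and G(s) <= (c + p) s gives
   x_* -> oo as theta_in -> -oo; for large j the criterion fails, so the limit in j holds
   vacuously. *)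

Section OneSidedLimits.

Variables (F : (R -> Prop) -> Prop) (x : R).
Context {FF : ProperFilter F}.
Hypothesis F_punctured : filter_le F (locally' x).

Lemma lim_eventually_eq_unique (f g : R -> R) (a b : R) :
  F (fun y => f y = g y) -> filterlim f F (locally a) -> filterlim g F (locally b) ->
  a = b.
Proof.
  intros Hfg Hf Hg.
  exact (filterlim_locally_unique g a b (filterlim_ext_loc f g Hfg Hf) Hg).
Qed.

Lemma continuous_filterlim (g : R -> R) : continuous g x -> filterlim g F (locally (g x)).
Proof.
  apply filterlim_filter_le_1, (filter_le_trans _ _ _ _ F_punctured), filter_le_within.
Qed.

Lemma is_derive_quotient_lim (g : R -> R) (q : R) :
  is_derive g x q -> filterlim (fun y => (g y - g x) / (y - x)) F (locally q).
Proof.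
  intros Hg. apply (filterlim_filter_le_1 _ F_punctured).
  intros P [eps HP]. apply is_derive_Reals in Hg.
  destruct (Hg eps (cond_pos eps)) as [delta Hd].
  exists delta. intros y Hy Hne. apply HP.
  change (Rabs (y - x) < delta) in Hy. change (Rabs ((g y - g x) / (y - x) - q) < eps).
  replace y with (x + (y - x)) at 1 by ring.
  apply Hd; [lra | exact Hy].
Qed.

Lemma eventually_ne : F (fun y => y <> x).
Proof. apply F_punctured. unfold locally', within. apply filter_forall. tauto. Qed.

Lemma quotient_lim_continuous (f : R -> R) (p : R) :
  filterlim (fun y => (f y - f x) / (y - x)) F (locally p) -> filterlim f F (locally (f x)).
Proof.
  intros Hq.
  assert (Hh : filterlim (fun y => y - x) F (locally 0)).
  { assert (Hc : continuous (fun y => y - x) x)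
      by (apply (ex_derive_continuous (V := R_NormedModule)); auto_derive; easy).
    pose proof (continuous_filterlim _ Hc) as Hlim. simpl in Hlim.
    rewrite Rminus_diag in Hlim. exact Hlim. }
  assert (Hlim : filterlim (fun y => plus (f x) (mult ((f y - f x) / (y - x)) (y - x)))
                   F (locally (plus (f x) (mult p 0)))).
  { eapply filterlim_comp_2;
      [apply filterlim_const | | apply (filterlim_plus (V := R_NormedModule))].
    eapply filterlim_comp_2;
      [exact Hq | exact Hh | apply (filterlim_mult (K := R_AbsRing))]. }
  replace (plus (f x) (mult p 0)) with (f x) in Hlim
    by (unfold plus, mult; simpl; ring).
  refine (filterlim_ext_loc _ _ (filter_imp _ _ _ eventually_ne) Hlim).
  intros y Hy. unfold plus, mult; simpl. field. lra.
Qed.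

Lemma eventually_eq_derive_unique (f g : R -> R) (p q : R) :
  F (fun y => f y = g y) -> is_derive g x q ->
  filterlim (fun y => (f y - f x) / (y - x)) F (locally p) ->
  f x = g x /\ p = q.
Proof.
  intros Hfg Hg Hp.
  assert (Hx : f x = g x).
  { apply (lim_eventually_eq_unique f g _ _ Hfg (quotient_lim_continuous f p Hp)).
    apply continuous_filterlim, (ex_derive_continuous (V := R_NormedModule)).
    exists q; exact Hg. }
  split; [exact Hx|].
  refine (lim_eventually_eq_unique _ _ _ _ _ Hp (is_derive_quotient_lim g q Hg)).
  refine (filter_imp _ _ _ Hfg). intros y Hy. rewrite Hy, Hx. reflexivity.
Qed.

End OneSidedLimits.

Lemma at_left_punctured (x : R) : filter_le (at_left x) (locally' x).
Proof.
  intros P. unfold at_left, locally', within.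
  apply filter_imp. intros y HP Hy. apply HP. lra.
Qed.

Lemma at_right_punctured (x : R) : filter_le (at_right x) (locally' x).
Proof.
  intros P. unfold at_right, locally', within.
  apply filter_imp. intros y HP Hy. apply HP. lra.
Qed.

Lemma at_left_of_interval (x delta : R) (P : R -> Prop) :
  0 < delta -> (forall y, x - delta < y < x -> P y) -> at_left x P.
Proof.
  intros Hd HP. exists (mkposreal delta Hd). intros y Hy Hlt. apply HP.
  change (Rabs (y - x) < delta) in Hy. apply Rabs_def2 in Hy. lra.
Qed.

Lemma at_right_of_interval (x delta : R) (P : R -> Prop) :
  0 < delta -> (forall y, x < y < x + delta -> P y) -> at_right x P.
Proof.
  intros Hd HP. exists (mkposreal delta Hd). intros y Hy Hlt. apply HP.
  change (Rabs (y - x) < delta) in Hy. apply Rabs_def2 in Hy. lra.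
Qed.

Lemma left_deriv_nonneg_of_max (f : R -> R) (x p delta : R) :
  0 < delta -> (forall y, x - delta < y < x -> f y <= f x) -> left_deriv f x p ->
  0 <= p.
Proof.
  intros Hd Hmax Hp.
  apply (closed_filterlim_loc _ (fun q => 0 <= q) p Hp); [|apply closed_ge].
  apply (at_left_of_interval x delta _ Hd). intros y Hy.
  specialize (Hmax y Hy).
  replace ((f y - f x) / (y - x)) with ((f x - f y) / (x - y)) by (field; lra).
  apply Rdiv_le_0_compat; lra.
Qed.

Definition is_interval (I : R -> Prop) : Prop :=
  forall x y z, I x -> I z -> x <= y <= z -> I y.

Lemma is_interval_gt (a : R) : is_interval (fun x => a < x).
Proof. intros x y z Hx _ Hy. lra. Qed.

Lemma is_interval_open (a b : R) : is_interval (fun x => a < x < b).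
Proof. intros x y z Hx Hz Hy. lra. Qed.

Lemma lt_of_derive_pos (f df : R -> R) (u v : R) :
  u < v -> (forall t, u <= t <= v -> is_derive f t (df t)) ->
  (forall t, u < t < v -> 0 < df t) -> f u < f v.
Proof.
  intros Huv Hf Hpos.
  destruct (MVT_cor2 f df u v Huv) as [t [Ht Hut]].
  { intros t Ht. apply is_derive_Reals, Hf, Ht. }
  specialize (Hpos t Hut). nra.
Qed.

Lemma derive_zero_const (I : R -> Prop) (h : R -> R) :
  is_interval I -> (forall x, I x -> is_derive h x 0) ->
  forall x y, I x -> I y -> h x = h y.
Proof.
  intros HI Hh.
  assert (Hlt : forall x y, I x -> I y -> x < y -> h x = h y).
  { intros x y Hx Hy Hxy.
    destruct (MVT_cor2 h (fun _ => 0) x y Hxy) as [c [Hc _]]; [|lra].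
    intros c Hc. apply is_derive_Reals, Hh, (HI x c y); assumption. }
  intros x y Hx Hy. destruct (Rtotal_order x y) as [L|[E|G]].
  - auto.
  - subst; reflexivity.
  - symmetry; auto.
Qed.

Lemma linear_ode_solution_form (I : R -> Prop) (a x0 : R) (g : R -> R) :
  is_interval I -> I x0 -> (forall x, I x -> is_derive g x (a * g x)) ->
  exists K, forall x, I x -> g x = K * exp (a * x).
Proof.
  intros HI Hx0 Hg.
  set (h := fun x => g x * exp (- (a * x))).
  assert (Hh : forall x, I x -> is_derive h x 0).
  { intros x Hx. unfold h. auto_derive.
    - exists (a * g x); exact (Hg x Hx).
    - replace (Derive (fun t => g t) x) with (a * g x)
        by (symmetry; apply is_derive_unique, Hg, Hx).
      ring. }
  exists (h x0). intros x Hx.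
  rewrite <- (derive_zero_const I h HI Hh x x0 Hx Hx0). unfold h.
  rewrite Rmult_assoc, <- exp_plus, Rplus_opp_l, exp_0. ring.
Qed.

Lemma drift_diffusion_solution_form (I : R -> Prop) (b d r x0 : R) (f : R -> R) :
  b <> 0 -> d <> 0 -> is_interval I -> I x0 ->
  (forall x, I x -> ex_derive f x /\ ex_derive (Derive f) x /\
     b * Derive f x - d * Derive (Derive f) x = r) ->
  exists A K, forall x, I x -> f x = A + r / b * x + K * exp (b / d * x).
Proof.
  intros Hb Hd HI Hx0 Hf.
  destruct (linear_ode_solution_form I (b / d) x0 (fun x => Derive f x - r / b) HI Hx0)
    as [K HK].
  { intros x Hx. destruct (Hf x Hx) as [_ [[f2 Hf2] Heq]].
    rewrite (is_derive_unique _ _ _ Hf2) in Heq.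
    replace (b / d * (Derive f x - r / b)) with (f2 - 0)
      by (rewrite <- Heq; field; auto).
    apply (is_derive_minus _ _ x _ _ Hf2 (is_derive_const _ x)). }
  set (h := fun x => f x - r / b * x - K * d / b * exp (b / d * x)).
  assert (Hh : forall x, I x -> is_derive h x 0).
  { intros x Hx. unfold h. auto_derive.
    - apply Hf, Hx.
    - change (Derive (fun t => f t) x) with (Derive f x).
      replace (Derive f x) with (r / b + K * exp (b / d * x)) by (rewrite <- HK; auto; ring).
      field. auto. }
  exists (h x0), (K * d / b). intros x Hx.
  rewrite <- (derive_zero_const I h HI Hh x x0 Hx Hx0). unfold h. ring.
Qed.

Lemma affine_exp_solves_drift_diffusion (b d r A K : R) (f : R -> R) :
  b <> 0 -> d <> 0 -> (forall x, f x = A + r / b * x + K * exp (b / d * x)) ->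
  forall x, ex_derive f x /\ ex_derive (Derive f) x /\
    b * Derive f x - d * Derive (Derive f) x = r.
Proof.
  intros Hb Hd Hf.
  set (f1 := fun x => r / b + K * (b / d) * exp (b / d * x)).
  assert (Df : forall x, is_derive f x (f1 x)).
  { intros x. apply (is_derive_ext (fun x => A + r / b * x + K * exp (b / d * x))).
    - intros t; symmetry; apply Hf.
    - unfold f1. auto_derive; [easy | ring]. }
  assert (Df1 : forall x, is_derive f1 x (K * (b / d) * (b / d) * exp (b / d * x))).
  { intros x. unfold f1. auto_derive; [easy | ring]. }
  assert (Ef : forall x, Derive f x = f1 x) by (intros; apply is_derive_unique, Df).
  intros x. split; [exists (f1 x); apply Df|]. split.
  - apply (ex_derive_ext f1); [intros; symmetry; apply Ef | eexists; apply Df1].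
  - rewrite Ef, (Derive_ext _ _ _ Ef), (is_derive_unique _ _ _ (Df1 x)).
    unfold f1. field. split; auto.
Qed.

Lemma sqr_div4_le_exp (t : R) : 0 <= t -> t * t / 4 <= exp t.
Proof.
  intros Ht. replace (exp t) with (exp (t / 2) * exp (t / 2))
    by (rewrite <- exp_plus; f_equal; field).
  pose proof (exp_ineq1_le (t / 2)). nra.
Qed.

Lemma exp_beats_affine (a M X : R) :
  0 < a -> exists x, X <= x /\ M * (1 + x) < exp (a * x).
Proof.
  intros Ha. set (q := 8 * Rabs M / (a * a)).
  assert (Hq : a * a * q = 8 * Rabs M) by (unfold q; field; lra).
  assert (0 <= q) by (unfold q; pose proof (Rabs_pos M); apply Rdiv_le_0_compat; nra).
  exists (Rmax X 1 + q). set (x := Rmax X 1 + q).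
  pose proof (Rmax_l X 1). pose proof (Rmax_r X 1).
  pose proof (sqr_div4_le_exp (a * x) ltac:(unfold x; nra)).
  assert (M * (1 + x) <= 2 * Rabs M * x)
    by (pose proof (Rle_abs M); pose proof (Rabs_pos M); unfold x in *; nra).
  split; [unfold x; lra|].
  assert (8 * Rabs M < a * a * x) by (unfold x; nra).
  assert (2 * Rabs M * x < a * x * (a * x) / 4) by (unfold x in *; nra).
  lra.
Qed.

Lemma exp_coeff_zero_of_linear_growth (A c K a s C X : R) :
  0 < a ->
  (forall x, X <= x -> s < x -> Rabs (A + c * x + K * exp (a * x)) <= C * (1 + Rabs x)) ->
  K = 0.
Proof.
  intros Ha Hgrowth. destruct (Req_dec K 0) as [|HK]; [assumption|exfalso].
  assert (HKpos : 0 < Rabs K) by (apply Rabs_pos_lt, HK).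
  set (M := (Rabs C + Rabs A + Rabs c) / Rabs K).
  destruct (exp_beats_affine a M (Rmax (Rmax X (s + 1)) 0) Ha) as [x [Hx Hexp]].
  pose proof (Rmax_l (Rmax X (s + 1)) 0). pose proof (Rmax_r (Rmax X (s + 1)) 0).
  pose proof (Rmax_l X (s + 1)). pose proof (Rmax_r X (s + 1)).
  specialize (Hgrowth x ltac:(lra) ltac:(lra)).
  rewrite (Rabs_right x) in Hgrowth by lra.
  assert (Hdom : Rabs C * (1 + x) + Rabs A + Rabs c * x < Rabs K * exp (a * x)).
  { apply (Rmult_lt_compat_l (Rabs K)) in Hexp; [|exact HKpos].
    unfold M in Hexp. replace (Rabs K * ((Rabs C + Rabs A + Rabs c) / Rabs K * (1 + x)))
      with ((Rabs C + Rabs A + Rabs c) * (1 + x)) in Hexp by (field; lra).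
    pose proof (Rabs_pos A). pose proof (Rabs_pos c). nra. }
  set (Y := A + c * x + K * exp (a * x)) in Hgrowth.
  assert (Htri : Rabs (K * exp (a * x)) <= Rabs Y + Rabs A + Rabs c * x).
  { replace (K * exp (a * x)) with (Y + - A + - (c * x)) by (unfold Y; ring).
    pose proof (Rabs_triang (Y + - A) (- (c * x))).
    pose proof (Rabs_triang Y (- A)).
    rewrite !Rabs_Ropp, Rabs_mult, (Rabs_right x) in * by lra. lra. }
  rewrite Rabs_mult, (Rabs_right (exp _)) in Htri by (left; apply exp_pos).
  pose proof (Rle_abs C). nra.
Qed.

Lemma affine_linear_growth (a b x : R) :
  Rabs (a + b * x) <= (Rabs a + Rabs b) * (1 + Rabs x).
Proof.
  pose proof (Rabs_triang a (b * x)). rewrite Rabs_mult in *.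
  pose proof (Rabs_pos a). pose proof (Rabs_pos b). pose proof (Rabs_pos x). nra.
Qed.

Lemma one_sub_exp_neg_div_lt (v w : R) :
  0 < v < w -> (1 - exp (- w)) / w < (1 - exp (- v)) / v.
Proof.
  intros [Hv Hvw].
  assert (Ew : exp (- w) = exp (- v) * exp (- (w - v)))
    by (rewrite <- exp_plus; f_equal; ring).
  pose proof (exp_ineq1 (- (w - v)) ltac:(lra)).
  assert (Hev : exp (- v) * (1 + v) <= 1).
  { pose proof (exp_ineq1_le v). pose proof (exp_pos (- v)).
    replace 1 with (exp (- v) * exp v) at 2
      by (rewrite <- exp_plus, Rplus_opp_l; apply exp_0).
    nra. }
  pose proof (exp_pos (- v)).
  apply (Rmult_lt_reg_r (v * w)); [nra|].
  replace ((1 - exp (- w)) / w * (v * w)) with (v * (1 - exp (- w))) by (field; lra).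
  replace ((1 - exp (- v)) / v * (v * w)) with (w * (1 - exp (- v))) by (field; lra).
  rewrite Ew.
  assert (v * exp (- v) * (1 - exp (- (w - v))) < v * exp (- v) * (w - v))
    by (apply Rmult_lt_compat_l; nra).
  assert (v * exp (- v) * (w - v) <= (1 - exp (- v)) * (w - v)) by nra.
  nra.
Qed.

Section StefanProfiles.

Variables (kappa1 kappa2 d1 d2 l r : R).
Hypotheses (Hk1 : 0 < kappa1) (Hk2 : 0 < kappa2) (Hd1 : 0 < d1) (Hd2 : 0 < d2)
  (Hl : l < 0) (Hr : 0 < r).

Definition vapor_slope (j : R) : R := r / (kappa2 * j).
Definition liquid_slope (j : R) : R := r / (kappa1 * j).
Definition liquid_rate (j : R) : R := kappa1 * j / d1.
Definition interface_slope (j : R) : R := (l * j + d2 * vapor_slope j) / d1.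

Definition liquid_drop (j s : R) : R :=
  liquid_slope j * s
  + (interface_slope j - liquid_slope j) / liquid_rate j
    * (1 - exp (- (liquid_rate j * s))).

Definition liquid_drop_deriv (j s : R) : R :=
  liquid_slope j * (1 - exp (- (liquid_rate j * s)))
  + interface_slope j * exp (- (liquid_rate j * s)).

Definition liquid_profile (j ts xs t : R) : R := ts - liquid_drop j (xs - t).
Definition vapor_profile (j ts xs t : R) : R := ts + vapor_slope j * (t - xs).

Lemma interface_slope_nonneg_iff (j : R) :
  0 < j -> (- l <= d2 * r / (kappa2 * j ^ 2) <-> 0 <= interface_slope j).
Proof.
  intros Hj.
  assert (E : interface_slope j = j / d1 * (l + d2 * r / (kappa2 * j ^ 2)))
    by (unfold interface_slope, vapor_slope; field; lra).
  assert (Hjd : 0 < j / d1) by (apply Rdiv_lt_0_compat; lra).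
  rewrite E. split; intros H; nra.
Qed.

Lemma interface_slope_antitone (j j' : R) :
  0 < j -> j < j' -> interface_slope j' <= interface_slope j.
Proof.
  intros Hj Hjj. unfold interface_slope, vapor_slope, Rdiv.
  apply Rmult_le_compat_r; [left; apply Rinv_0_lt_compat, Hd1|].
  assert (/ (kappa2 * j') < / (kappa2 * j))
    by (apply Rinv_lt_contravar; [apply Rmult_lt_0_compat |]; nra).
  assert (d2 * (r * / (kappa2 * j')) < d2 * (r * / (kappa2 * j)))
    by (apply Rmult_lt_compat_l; [|apply Rmult_lt_compat_l]; lra).
  nra.
Qed.

Lemma liquid_rate_pos (j : R) : 0 < j -> 0 < liquid_rate j.
Proof. intros Hj. apply Rdiv_lt_0_compat; nra. Qed.

Lemma liquid_slope_pos (j : R) : 0 < j -> 0 < liquid_slope j.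
Proof. intros Hj. apply Rdiv_lt_0_compat; nra. Qed.

Lemma liquid_drop_0 (j : R) : liquid_drop j 0 = 0.
Proof. unfold liquid_drop. rewrite !Rmult_0_r, Ropp_0, exp_0. ring. Qed.

Lemma is_derive_liquid_drop (j s : R) :
  0 < j -> is_derive (liquid_drop j) s (liquid_drop_deriv j s).
Proof.
  intros Hj. pose proof (liquid_rate_pos j Hj).
  unfold liquid_drop, liquid_drop_deriv. auto_derive; [easy|]. field. lra.
Qed.

Lemma liquid_drop_deriv_pos (j s : R) :
  0 < j -> 0 <= interface_slope j -> 0 < s -> 0 < liquid_drop_deriv j s.
Proof.
  intros Hj Hp Hs. unfold liquid_drop_deriv.
  pose proof (liquid_slope_pos j Hj). pose proof (liquid_rate_pos j Hj).
  pose proof (exp_pos (- (liquid_rate j * s))).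
  assert (exp (- (liquid_rate j * s)) < 1) by (rewrite <- exp_0; apply exp_increasing; nra).
  nra.
Qed.

Lemma liquid_drop_increasing (j u v : R) :
  0 < j -> 0 <= interface_slope j -> 0 <= u -> u < v ->
  liquid_drop j u < liquid_drop j v.
Proof.
  intros Hj Hp Hu Huv.
  apply (lt_of_derive_pos _ (liquid_drop_deriv j)); [exact Huv| |].
  - intros t _. apply is_derive_liquid_drop, Hj.
  - intros t Ht. apply liquid_drop_deriv_pos; auto; lra.
Qed.

Lemma lt_of_liquid_drop_lt (j u v : R) :
  0 < j -> 0 <= interface_slope j -> 0 <= v ->
  liquid_drop j u < liquid_drop j v -> u < v.
Proof.
  intros Hj Hp Hv Hlt. destruct (Rlt_le_dec u v) as [|Hvu]; [assumption|].
  destruct (Req_dec v u) as [<-|Hne]; [lra|].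
  pose proof (liquid_drop_increasing j v u Hj Hp Hv ltac:(lra)). lra.
Qed.

Lemma liquid_drop_inj (j u v : R) :
  0 < j -> 0 <= interface_slope j -> 0 <= u -> 0 <= v ->
  liquid_drop j u = liquid_drop j v -> u = v.
Proof.
  intros Hj Hp Hu Hv E.
  destruct (Rtotal_order u v) as [Hlt|[|Hlt]]; [|assumption|].
  - pose proof (liquid_drop_increasing j u v Hj Hp Hu Hlt). lra.
  - pose proof (liquid_drop_increasing j v u Hj Hp Hv Hlt). lra.
Qed.

Lemma liquid_drop_nonneg (j s : R) :
  0 < j -> 0 <= interface_slope j -> 0 <= s -> 0 <= liquid_drop j s.
Proof.
  intros Hj Hp Hs. rewrite <- (liquid_drop_0 j).
  destruct (Req_dec s 0) as [->|Hne]; [lra|].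
  left. apply liquid_drop_increasing; auto; lra.
Qed.

Lemma liquid_drop_le_linear (j u : R) :
  0 < j -> 0 <= interface_slope j -> 0 <= u ->
  liquid_drop j u <= (liquid_slope j + interface_slope j) * u.
Proof.
  intros Hj Hp Hu. unfold liquid_drop.
  pose proof (liquid_slope_pos j Hj). pose proof (liquid_rate_pos j Hj).
  set (a := liquid_rate j) in *. set (c := liquid_slope j) in *.
  set (p := interface_slope j) in *.
  set (phi := (1 - exp (- (a * u))) / a).
  assert (0 <= phi).
  { apply Rdiv_le_0_compat; [|lra].
    assert (exp (- (a * u)) <= 1).
    { rewrite <- exp_0. destruct (Req_dec u 0) as [->|].
      - rewrite Rmult_0_r, Ropp_0. lra.
      - left. apply exp_increasing. nra. }
    lra. }
  assert (phi <= u).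
  { unfold phi. apply (Rmult_le_reg_l a); [lra|].
    replace (a * ((1 - exp (- (a * u))) / a)) with (1 - exp (- (a * u))) by (field; lra).
    pose proof (exp_ineq1_le (- (a * u))). lra. }
  replace ((p - c) / a * (1 - exp (- (a * u)))) with ((p - c) * phi)
    by (unfold phi; field; lra).
  nra.
Qed.

Lemma liquid_drop_onto (j D : R) :
  0 < j -> 0 <= interface_slope j -> 0 < D -> exists s, 0 < s /\ liquid_drop j s = D.
Proof.
  intros Hj Hp HD.
  pose proof (liquid_slope_pos j Hj). pose proof (liquid_rate_pos j Hj).
  set (B := (interface_slope j - liquid_slope j) / liquid_rate j).
  set (S := (D + Rabs B) / liquid_slope j + 1).
  assert (HS : 1 <= S) by (unfold S; pose proof (Rabs_pos B);
                           pose proof (Rdiv_le_0_compat (D + Rabs B) _ ltac:(lra) H); lra).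
  assert (HDS : D < liquid_drop j S).
  { unfold liquid_drop. fold B.
    assert (0 < exp (- (liquid_rate j * S))) by apply exp_pos.
    assert (exp (- (liquid_rate j * S)) < 1) by (rewrite <- exp_0; apply exp_increasing; nra).
    assert (- Rabs B <= B * (1 - exp (- (liquid_rate j * S)))).
    { destruct (Rle_lt_dec 0 B); [rewrite Rabs_right | rewrite Rabs_left]; nra. }
    assert (liquid_slope j * S = D + Rabs B + liquid_slope j) by (unfold S; field; lra).
    lra. }
  destruct (IVT (fun s => liquid_drop j s - D) 0 S) as [s [Hs Hzero]].
  - intros x. apply continuity_pt_minus; [|apply continuity_pt_const; intros ??; reflexivity].
    apply continuity_pt_filterlim, (ex_derive_continuous (V := R_NormedModule)).
    eexists; apply is_derive_liquid_drop, Hj.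
  - lra.
  - rewrite liquid_drop_0. lra.
  - lra.
  - exists s. split; [|lra].
    destruct (Req_dec s 0) as [->|]; [rewrite liquid_drop_0 in Hzero; lra | lra].
Qed.

Lemma liquid_slope_one_sub_exp_eq (j t : R) :
  0 < j -> 0 < t ->
  liquid_slope j * (1 - exp (- (liquid_rate j * t)))
  = r * t / d1 * ((1 - exp (- (liquid_rate j * t))) / (liquid_rate j * t)).
Proof. intros Hj Ht. unfold liquid_slope, liquid_rate. field. repeat split; lra. Qed.

Lemma liquid_drop_flux_decreasing (j j' u : R) :
  0 < j -> j < j' -> 0 <= interface_slope j' -> 0 < u ->
  liquid_drop j' u < liquid_drop j u.
Proof.
  intros Hj Hjj Hp' Hu.
  assert (Hlt : liquid_drop j 0 - liquid_drop j' 0 < liquid_drop j u - liquid_drop j' u).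
  { apply (lt_of_derive_pos (fun t => liquid_drop j t - liquid_drop j' t)
             (fun t => liquid_drop_deriv j t - liquid_drop_deriv j' t)); [exact Hu| |].
    - intros t _. exact (is_derive_minus _ _ t _ _ (is_derive_liquid_drop j t Hj)
                                        (is_derive_liquid_drop j' t ltac:(lra))).
    - intros t Ht. unfold liquid_drop_deriv.
      rewrite !liquid_slope_one_sub_exp_eq by lra.
      assert (Hvw : 0 < liquid_rate j * t < liquid_rate j' * t).
      { unfold liquid_rate. split; [apply Rmult_lt_0_compat; [apply Rdiv_lt_0_compat|]|];
          [nra | lra | lra |].
        apply Rmult_lt_compat_r; [lra|]. unfold Rdiv.
        apply Rmult_lt_compat_r; [apply Rinv_0_lt_compat|]; nra. }
      pose proof (one_sub_exp_neg_div_lt _ _ Hvw).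
      pose proof (interface_slope_antitone j j' Hj Hjj).
      assert (exp (- (liquid_rate j' * t)) < exp (- (liquid_rate j * t)))
        by (apply exp_increasing; lra).
      pose proof (exp_pos (- (liquid_rate j' * t))).
      assert (0 < r * t / d1) by (apply Rdiv_lt_0_compat; nra).
      nra. }
  rewrite !liquid_drop_0 in Hlt. lra.
Qed.

Lemma liquid_profile_affine_exp (j ts xs : R) :
  0 < j -> exists A K, forall t,
    liquid_profile j ts xs t = A + r / (kappa1 * j) * t + K * exp (kappa1 * j / d1 * t).
Proof.
  intros Hj.
  set (B := (interface_slope j - liquid_slope j) / liquid_rate j).
  exists (ts - liquid_slope j * xs - B), (B * exp (- (liquid_rate j * xs))).
  intros t. unfold liquid_profile, liquid_drop. fold B.
  replace (- (liquid_rate j * (xs - t))) with (- (liquid_rate j * xs) + kappa1 * j / d1 * t)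
    by (unfold liquid_rate; ring).
  rewrite exp_plus. unfold liquid_slope. ring.
Qed.

Lemma affine_exp_eq_liquid_profile (j ts xs A K : R) :
  0 < j ->
  A + liquid_slope j * xs + K * exp (liquid_rate j * xs) = ts ->
  liquid_slope j + K * liquid_rate j * exp (liquid_rate j * xs) = interface_slope j ->
  forall t, A + liquid_slope j * t + K * exp (liquid_rate j * t) = liquid_profile j ts xs t.
Proof.
  intros Hj Hval Hslope t. pose proof (liquid_rate_pos j Hj).
  unfold liquid_profile, liquid_drop. rewrite <- Hslope, <- Hval.
  replace (exp (liquid_rate j * t))
    with (exp (liquid_rate j * xs) * exp (- (liquid_rate j * (xs - t))))
    by (rewrite <- exp_plus; f_equal; ring).
  field. lra.
Qed.

Lemma is_derive_liquid_profile (j ts xs t : R) :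
  0 < j -> is_derive (liquid_profile j ts xs) t (liquid_drop_deriv j (xs - t)).
Proof.
  intros Hj. unfold liquid_profile.
  auto_derive; [eexists; apply is_derive_liquid_drop, Hj|].
  replace (Derive (fun x => liquid_drop j x) (xs + - t)) with (liquid_drop_deriv j (xs - t))
    by (symmetry; apply is_derive_unique, is_derive_liquid_drop, Hj).
  ring.
Qed.

Lemma stefan_vapor_phase (j ts tin xs p2 : R) (th1 th2 : R -> R) :
  0 < j ->
  stefan_solution kappa1 kappa2 d1 d2 l j r ts tin xs th1 th2 ->
  right_deriv th2 xs p2 ->
  p2 = vapor_slope j /\ forall t, xs <= t -> th2 t = vapor_profile j ts xs t.
Proof.
  intros Hj (_ & _ & Hode & _ & Hts & _ & _ & _ & _ & C & X & Hgrowth) Hp2.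
  destruct (drift_diffusion_solution_form (fun x => xs < x) (kappa2 * j) d2 r (xs + 1) th2)
    as [A [K Hform]];
    [apply Rgt_not_eq; nra | apply Rgt_not_eq, Hd2 | apply is_interval_gt | simpl; lra
    | exact Hode |].
  assert (HK : K = 0).
  { apply (exp_coeff_zero_of_linear_growth A (r / (kappa2 * j)) K (kappa2 * j / d2) xs C X).
    - apply Rdiv_lt_0_compat; nra.
    - intros x HX Hx. rewrite <- (Hform x Hx). apply Hgrowth, HX. }
  subst K.
  set (g := fun t => A + r / (kappa2 * j) * t).
  assert (Hg : forall t, xs < t -> th2 t = g t) by (intros t Ht; rewrite Hform by exact Ht;
                                                    unfold g; ring).
  assert (Hnear : at_right xs (fun y => th2 y = g y)).
  { apply (at_right_of_interval xs 1); [lra|]. intros y Hy. apply Hg. lra. }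
  assert (Dg : is_derive g xs (r / (kappa2 * j))) by (unfold g; auto_derive; [easy | ring]).
  destruct (eventually_eq_derive_unique _ _ (at_right_punctured xs) _ _ _ _ Hnear Dg Hp2)
    as [Hval Hslope].
  split; [exact Hslope|].
  intros t Ht. unfold vapor_profile, vapor_slope.
  destruct (Req_dec t xs) as [->|Hne]; [rewrite Hts; ring|].
  rewrite <- Hts, Hval, Hg by lra. unfold g. ring.
Qed.

Lemma stefan_liquid_phase (j ts tin xs : R) (th1 th2 : R -> R) :
  0 < j ->
  stefan_solution kappa1 kappa2 d1 d2 l j r ts tin xs th1 th2 ->
  left_deriv th1 xs (interface_slope j) ->
  forall t, 0 <= t <= xs -> th1 t = liquid_profile j ts xs t.
Proof.
  intros Hj (Hxs & Hode & _ & Hts & _ & _ & _ & Hcont0 & _) Hp1.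
  destruct (drift_diffusion_solution_form (fun x => 0 < x < xs) (kappa1 * j) d1 r (xs / 2) th1)
    as [A [K Hform]];
    [apply Rgt_not_eq; nra | apply Rgt_not_eq, Hd1 | apply is_interval_open | simpl; lra
    | exact Hode |].
  set (g := fun t => A + liquid_slope j * t + K * exp (liquid_rate j * t)).
  assert (Hg : forall t, 0 < t < xs -> th1 t = g t) by exact Hform.
  assert (Dg : forall t, is_derive g t
                 (liquid_slope j + K * liquid_rate j * exp (liquid_rate j * t)))
    by (intros t; unfold g; auto_derive; [easy | ring]).
  assert (Hnear : at_left xs (fun y => th1 y = g y)).
  { apply (at_left_of_interval xs xs); [exact Hxs|]. intros y Hy. apply Hg. lra. }
  destruct (eventually_eq_derive_unique _ _ (at_left_punctured xs) _ _ _ _ Hnear (Dg xs) Hp1)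
    as [Hval Hslope].
  assert (Hprofile := affine_exp_eq_liquid_profile j ts xs A K Hj
                        ltac:(rewrite <- Hts, Hval; reflexivity) (eq_sym Hslope)).
  intros t Ht. rewrite <- Hprofile. fold (g t).
  destruct (Req_dec t 0) as [->|H0]; [|destruct (Req_dec t xs) as [->|Hxs']].
  - assert (Hnear0 : at_right 0 (fun y => th1 y = g y)).
    { apply (at_right_of_interval 0 xs); [exact Hxs|]. intros y Hy. apply Hg. lra. }
    apply (lim_eventually_eq_unique _ _ _ _ _ Hnear0 Hcont0).
    apply (continuous_filterlim _ _ (at_right_punctured 0)),
      (ex_derive_continuous (V := R_NormedModule)).
    eexists; apply Dg.
  - exact Hval.
  - apply Hg. lra.
Qed.

Lemma stefan_solution_profiles (j ts tin xs : R) (th1 th2 : R -> R) :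
  0 < j ->
  stefan_solution kappa1 kappa2 d1 d2 l j r ts tin xs th1 th2 ->
  0 <= interface_slope j /\ liquid_drop j xs = ts - tin /\
  (forall t, 0 <= t <= xs -> th1 t = liquid_profile j ts xs t) /\
  (forall t, xs <= t -> th2 t = vapor_profile j ts xs t).
Proof.
  intros Hj Hsol.
  pose proof Hsol as (Hxs & _ & _ & Hts & _ & (p1 & p2 & Hp1 & Hp2 & Hstefan) & Htin & _
                      & Hbelow & _).
  destruct (stefan_vapor_phase j ts tin xs p2 th1 th2 Hj Hsol Hp2) as [Ep2 Hvapor].
  assert (Ep1 : p1 = interface_slope j).
  { unfold interface_slope. rewrite <- Ep2.
    replace (l * j + d2 * p2) with (d1 * p1) by lra. field. lra. }
  subst p1.
  pose proof (stefan_liquid_phase j ts tin xs th1 th2 Hj Hsol Hp1) as Hliquid.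
  split; [|split; [|split]].
  - apply (left_deriv_nonneg_of_max th1 xs _ xs Hxs); [|exact Hp1].
    intros y Hy. rewrite Hts. apply Hbelow. lra.
  - rewrite <- Htin, Hliquid by lra. unfold liquid_profile. rewrite Rminus_0_r. ring.
  - exact Hliquid.
  - exact Hvapor.
Qed.

Lemma stefan_solution_of_liquid_drop (j ts tin s : R) :
  0 < j -> 0 <= interface_slope j -> 0 < s -> liquid_drop j s = ts - tin ->
  stefan_solution kappa1 kappa2 d1 d2 l j r ts tin s
    (liquid_profile j ts s) (vapor_profile j ts s).
Proof.
  intros Hj Hp Hs Hdrop.
  destruct (liquid_profile_affine_exp j ts s Hj) as [A [K Hform]].
  assert (Hode1 := affine_exp_solves_drift_diffusion (kappa1 * j) d1 r A K _
                     ltac:(apply Rgt_not_eq; nra) (Rgt_not_eq _ _ Hd1) Hform).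
  assert (Hode2 := affine_exp_solves_drift_diffusion (kappa2 * j) d2 r
                     (ts - vapor_slope j * s) 0 (vapor_profile j ts s)
                     ltac:(apply Rgt_not_eq; nra) (Rgt_not_eq _ _ Hd2)
                     ltac:(intros; unfold vapor_profile, vapor_slope; ring)).
  assert (Hval : liquid_profile j ts s s = ts)
    by (unfold liquid_profile; rewrite Rminus_diag, liquid_drop_0; ring).
  assert (Dliq : forall t, is_derive (liquid_profile j ts s) t (liquid_drop_deriv j (s - t)))
    by (intros t; apply is_derive_liquid_profile, Hj).
  assert (Dvap : forall t, is_derive (vapor_profile j ts s) t (vapor_slope j))
    by (intros t; unfold vapor_profile; auto_derive; [easy | ring]).
  split; [exact Hs|]. split; [intros x _; apply Hode1|]. split; [intros x _; apply Hode2|].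
  split; [exact Hval|]. split; [unfold vapor_profile; ring|].
  split.
  { exists (interface_slope j), (vapor_slope j). split; [|split].
    - replace (interface_slope j) with (liquid_drop_deriv j (s - s)).
      + apply (is_derive_quotient_lim _ _ (at_left_punctured s)), Dliq.
      + unfold liquid_drop_deriv. rewrite Rminus_diag, Rmult_0_r, Ropp_0, exp_0. ring.
    - apply (is_derive_quotient_lim _ _ (at_right_punctured s)), Dvap.
    - unfold interface_slope. field. lra. }
  split; [unfold liquid_profile; rewrite Rminus_0_r, Hdrop; ring|].
  split.
  { apply (continuous_filterlim _ _ (at_right_punctured 0)),
      (ex_derive_continuous (V := R_NormedModule)).
    eexists; apply Dliq. }
  split.
  { intros x Hx. unfold liquid_profile.
    pose proof (liquid_drop_nonneg j (s - x) Hj Hp ltac:(lra)). lra. }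
  exists (Rabs (ts - vapor_slope j * s) + Rabs (vapor_slope j)), 0. intros x _.
  unfold vapor_profile.
  replace (ts + vapor_slope j * (x - s)) with ((ts - vapor_slope j * s) + vapor_slope j * x)
    by ring.
  apply affine_linear_growth.
Qed.

Lemma stefan_unique_iff (j ts tin : R) :
  0 < j -> tin < ts ->
  (- l <= d2 * r / (kappa2 * j ^ 2) <-> stefan_unique kappa1 kappa2 d1 d2 l j r ts tin).
Proof.
  intros Hj Htin. rewrite (interface_slope_nonneg_iff j Hj). split.
  - intros Hp.
    destruct (liquid_drop_onto j (ts - tin) Hj Hp ltac:(lra)) as [s [Hs Hdrop]].
    exists s, (liquid_profile j ts s), (vapor_profile j ts s).
    split; [exact (stefan_solution_of_liquid_drop j ts tin s Hj Hp Hs Hdrop)|].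
    intros xs th1 th2 Hsol.
    destruct (stefan_solution_profiles j ts tin xs th1 th2 Hj Hsol)
      as (_ & Hdrop' & Hliquid & Hvapor).
    assert (xs = s).
    { apply (liquid_drop_inj j xs s Hj Hp); [apply Rlt_le, Hsol | lra | congruence]. }
    subst xs. auto.
  - intros (xs & th1 & th2 & Hsol & _).
    apply (stefan_solution_profiles j ts tin xs th1 th2 Hj Hsol).
Qed.

Lemma stefan_interface_entrance_decreasing (j ts tin tin' xs xs' : R)
    (th1 th2 th1' th2' : R -> R) :
  0 < j -> tin < tin' ->
  stefan_solution kappa1 kappa2 d1 d2 l j r ts tin xs th1 th2 ->
  stefan_solution kappa1 kappa2 d1 d2 l j r ts tin' xs' th1' th2' ->
  xs' < xs.
Proof.
  intros Hj Htin Hsol Hsol'.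
  destruct (stefan_solution_profiles _ _ _ _ _ _ Hj Hsol) as (Hp & Hdrop & _).
  destruct (stefan_solution_profiles _ _ _ _ _ _ Hj Hsol') as (_ & Hdrop' & _).
  apply (lt_of_liquid_drop_lt j xs' xs Hj Hp (Rlt_le _ _ (proj1 Hsol))). lra.
Qed.

Lemma stefan_interface_flux_increasing (j j' ts tin xs xs' : R)
    (th1 th2 th1' th2' : R -> R) :
  0 < j -> j < j' ->
  stefan_solution kappa1 kappa2 d1 d2 l j r ts tin xs th1 th2 ->
  stefan_solution kappa1 kappa2 d1 d2 l j' r ts tin xs' th1' th2' ->
  xs < xs'.
Proof.
  intros Hj Hjj Hsol Hsol'. assert (Hj' : 0 < j') by lra.
  destruct (stefan_solution_profiles _ _ _ _ _ _ Hj Hsol) as (_ & Hdrop & _).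
  destruct (stefan_solution_profiles _ _ _ _ _ _ Hj' Hsol') as (Hp' & Hdrop' & _).
  apply (lt_of_liquid_drop_lt j' xs xs' Hj' Hp' (Rlt_le _ _ (proj1 Hsol'))).
  rewrite Hdrop', <- Hdrop.
  apply liquid_drop_flux_decreasing; [exact Hj | exact Hjj | exact Hp' | apply Hsol].
Qed.

Lemma stefan_criterion_fails_large_flux :
  exists J, 0 < J /\ forall j, J <= j -> d2 * r / (kappa2 * j ^ 2) < - l.
Proof.
  set (Q := d2 * r / (kappa2 * - l)).
  assert (HQ : 0 < Q) by (unfold Q; apply Rdiv_lt_0_compat; nra).
  exists (Q + 1). split; [lra|]. intros j Hj.
  assert (HQj : Q < j ^ 2) by nra.
  apply (Rmult_lt_reg_r (kappa2 * j ^ 2)); [nra|].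
  replace (d2 * r / (kappa2 * j ^ 2) * (kappa2 * j ^ 2)) with (Q * (kappa2 * - l))
    by (unfold Q; field; repeat split; nra).
  assert (0 < kappa2 * - l) by nra.
  nra.
Qed.

Lemma stefan_interface_unbounded_entrance (j ts M : R) :
  0 < j -> 0 <= interface_slope j ->
  exists T, T < ts /\ forall tin xs th1 th2, tin <= T ->
    stefan_solution kappa1 kappa2 d1 d2 l j r ts tin xs th1 th2 -> M <= xs.
Proof.
  intros Hj Hp.
  set (c := liquid_slope j + interface_slope j).
  assert (Hc : 0 < c) by (unfold c; pose proof (liquid_slope_pos j Hj); lra).
  pose proof (Rmax_l M 0). pose proof (Rmax_r M 0).
  exists (ts - c * Rmax M 0 - 1). split; [nra|].
  intros tin xs th1 th2 Htin Hsol.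
  destruct (stefan_solution_profiles _ _ _ _ _ _ Hj Hsol) as (_ & Hdrop & _).
  pose proof (liquid_drop_le_linear j xs Hj Hp (Rlt_le _ _ (proj1 Hsol))) as Hle.
  fold c in Hle. nra.
Qed.

End StefanProfiles.

Theorem theorem4p1 (kappa1 kappa2 d1 d2 l r theta_star : R) :
  0 < kappa1 -> 0 < kappa2 -> 0 < d1 -> 0 < d2 -> l < 0 -> 0 < r ->
  (* existence and uniqueness criterion *)
  (forall jG theta_in, 0 < jG -> theta_in < theta_star ->
     (- l <= d2 * r / (kappa2 * jG ^ 2) <->
      stefan_unique kappa1 kappa2 d1 d2 l jG r theta_star theta_in)) /\
  (* x_* strictly decreasing in theta_in *)
  (forall jG theta_in theta_in' xs th1 th2 xs' th1' th2',
     0 < jG -> theta_in < theta_in' -> theta_in' < theta_star ->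
     - l <= d2 * r / (kappa2 * jG ^ 2) ->
     stefan_solution kappa1 kappa2 d1 d2 l jG r theta_star theta_in xs th1 th2 ->
     stefan_solution kappa1 kappa2 d1 d2 l jG r theta_star theta_in' xs' th1' th2' ->
     xs' < xs) /\
  (* x_* strictly increasing in jG *)
  (forall jG jG' theta_in xs th1 th2 xs' th1' th2',
     0 < jG -> jG < jG' -> theta_in < theta_star ->
     - l <= d2 * r / (kappa2 * jG ^ 2) ->
     - l <= d2 * r / (kappa2 * jG' ^ 2) ->
     stefan_solution kappa1 kappa2 d1 d2 l jG r theta_star theta_in xs th1 th2 ->
     stefan_solution kappa1 kappa2 d1 d2 l jG' r theta_star theta_in xs' th1' th2' ->
     xs < xs') /\
  (* x_* -> +oo as jG -> +oo (theta_in fixed) *)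
  (forall theta_in, theta_in < theta_star ->
     forall M, exists J, 0 < J /\
       forall jG xs th1 th2, J <= jG ->
       - l <= d2 * r / (kappa2 * jG ^ 2) ->
       stefan_solution kappa1 kappa2 d1 d2 l jG r theta_star theta_in xs th1 th2 ->
       M <= xs) /\
  (* x_* -> +oo as theta_in -> -oo (jG fixed) *)
  (forall jG, 0 < jG -> - l <= d2 * r / (kappa2 * jG ^ 2) ->
     forall M, exists T, T < theta_star /\
       forall theta_in xs th1 th2, theta_in <= T ->
       stefan_solution kappa1 kappa2 d1 d2 l jG r theta_star theta_in xs th1 th2 ->
       M <= xs).
Proof.
  intros Hk1 Hk2 Hd1 Hd2 Hl Hr.
  split; [|split; [|split; [|split]]].
  - intros j tin Hj Htin. apply stefan_unique_iff; assumption.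
  - intros j tin tin' xs th1 th2 xs' th1' th2' Hj Htin _ _.
    apply stefan_interface_entrance_decreasing; assumption.
  - intros j j' tin xs th1 th2 xs' th1' th2' Hj Hjj _ _ _.
    apply stefan_interface_flux_increasing; assumption.
  - intros tin _ M.
    destruct (stefan_criterion_fails_large_flux kappa2 d2 l r Hk2 Hd2 Hl Hr) as [J [HJ Hfail]].
    exists J. split; [exact HJ|]. intros j xs th1 th2 Hj Hcrit.
    specialize (Hfail j Hj). lra.
  - intros j Hj Hcrit M.
    apply stefan_interface_unbounded_entrance; try assumption.
    apply interface_slope_nonneg_iff; assumption.
Qed.
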